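(* Let $f:X\to Y$ be a continuous map between $T_0$-spaces. Then $f$ is locally closed if and only if the frame morphism $\Omega f=f^{-1}:\Omega Y\to\Omega X$ is a D-morphism.
   Context: $\Omega X$ is the frame of open sets of a space $X$. A point $x\in X$ is locally closed if $\{x\}$ is closed in some open neighborhood of $x$. A continuous map is locally closed if it maps locally closed points to locally closed points. For a frame $L$ and elements $a<b$, $a\lessdot b$ means there is no $x$ with $a<x<b$. A filter $F$ of a frame $L$ is slicing if it is prime and there exist $b\in F$, $a\notin F$ with $a\lessdot b$. A frame morphism $h:L\to M$ is a D-morphism if $h^{-1}(F)$ is a slicing filter of $L$ for every slicing filter $F$ of $M$. *)

From HB Require Import structures.
From mathcomp Require Import all_boot all_order.
From mathcomp Require Import boolp classical_sets functions topology.
Set Implicit Arguments. Unset Strict Implicit. Unset Printing Implicit Defensive.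
Local Open Scope classical_set_scope.

(* The frame Omega X of a space X is represented by the family [open] of open
   subsets of X, ordered by inclusion: meet = intersection, join = union,
   top = setT, bottom = set0.  A subset of Omega X is a [set (set X)] all of
   whose members are open. *)

Section Frames.
Variable X : topologicalType.

(* {x} is closed in some open neighbourhood U of x (subspace topology:
   the closed sets of U are the U `&` C with C closed in X). *)
Definition locally_closed_point (x : X) : Prop :=
  exists U : set X, open U /\ U x /\
    exists C : set X, closed C /\ U `&` C = [set x].

Definition covered_by (a b : set X) : Prop :=
  open a /\ open b /\ a `<` b /\
  ~ (exists c : set X, open c /\ a `<` c /\ c `<` b).

Definition frame_filter (F : set (set X)) : Prop :=
  F `<=` open /\ F setT /\
  (forall a b : set X, open b -> F a -> a `<=` b -> F b) /\
  (forall a b : set X, F a -> F b -> F (a `&` b)).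

Definition prime_filter (F : set (set X)) : Prop :=
  frame_filter F /\ ~ F set0 /\
  (forall a b : set X, open a -> open b -> F (a `|` b) -> F a \/ F b).

Definition slicing_filter (F : set (set X)) : Prop :=
  prime_filter F /\
  exists a b : set X, F b /\ ~ F a /\ covered_by a b.

End Frames.

Definition locally_closed_map (X Y : topologicalType) (f : X -> Y) : Prop :=
  forall x : X, locally_closed_point x -> locally_closed_point (f x).

(* Omega f = f^{-1} : Omega Y -> Omega X, and the preimage of a family F of
   opens of X under it is { V open in Y | f^{-1}(V) in F }. *)
Definition Omega_preimage (X Y : topologicalType) (f : X -> Y)
  (F : set (set X)) : set (set Y) :=
  [set V : set Y | open V /\ F (f @^-1` V)].

Definition D_morphism (X Y : topologicalType) (f : X -> Y) : Prop :=
  forall F : set (set X), slicing_filter F ->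
    slicing_filter (Omega_preimage f F).

From mathcomp Require Import all_boot all_order.
From mathcomp Require Import boolp classical_sets functions topology.
Set Implicit Arguments. Unset Strict Implicit. Unset Printing Implicit Defensive.
Local Open Scope classical_set_scope.

(* In a T0 space the slicing filters of the frame of opens are exactly the
   open-neighbourhood filters of locally closed points: a cover a ⋖ b forces
   b \ a to be a single point z, which is locally closed (closed in b), and a
   prime filter containing b but not a must be the filter of opens containing
   z.  Conversely, if {x} = U ∩ C with C closed, then U ∩ ~C ⋖ U witnesses that
   the open neighbourhoods of x form a slicing filter.  Since Ωf pulls back the
   open-neighbourhood filter of x to that of f x, and points of a T0 space are
   determined by their open neighbourhoods, the theorem follows. *)

Lemma properP (T : Type) (A B : set T) :
  A `<` B <-> A `<=` B /\ exists2 x, B x & ~ A x.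
Proof.
split=> [[AB nBA]|[AB [x Bx nAx]]]; last by split=> // /(_ x Bx).
split=> //; apply: contrapT => nex; apply: nBA => x Bx.
by apply: contrapT => nAx; apply: nex; exists x.
Qed.

Section OpenNeighbourhoods.
Variable X : topologicalType.
Implicit Types (x y z : X) (a b U V : set X).

Lemma kolmogorov_open_nbhs_inj : kolmogorov_space X -> injective (@open_nbhs X).
Proof.
move=> hX x y exy; apply: contrapT => /eqP /hX.
move=> [A [[/set_mem + /set_mem nAy]|[/set_mem + /set_mem nAx]]];
  rewrite nbhsE => -[B oB BA].
- by move: oB; rewrite exy => -[_ /BA].
- by move: oB; rewrite -exy => -[_ /BA].
Qed.

Lemma open_nbhs_prime_filter x : prime_filter (open_nbhs x).
Proof.
split; last by split=> [[_ []]|a b oa ob [_ [ax|bx]]]; [left|right].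
split; first by move=> V [].
split; first exact: open_nbhsT.
by split=> [a b ob [_ ax] /(_ x ax)|]; last exact: open_nbhsI.
Qed.

Lemma covered_by_open_nbhs_sub a b y z : covered_by a b ->
  b y -> ~ a y -> b z -> ~ a z -> open_nbhs y `<=` open_nbhs z.
Proof.
move=> [oa [ob [ab nbetween]]] b_y nay b_z naz V [oV Vy]; split=> //.
apply: contrapT => nVz; apply: nbetween.
have sab := properW ab.
exists (a `|` (V `&` b)); split; first by apply: openU => //; exact: openI.
split; apply/properP; split.
- by move=> w aw; left.
- by exists y => //; right.
- by move=> w [/sab|[]].
- by exists z => // -[|[]].
Qed.

Lemma covered_by_singleton a b : kolmogorov_space X -> covered_by a b ->
  exists z, b `\` a = [set z].
Proof.
move=> hX abcov; have [_ [_ [/properP [_ [z bz naz]] _]]] := abcov.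
exists z; apply/seteqP; split=> [y [b_y nay]|_ ->] //=.
apply: kolmogorov_open_nbhs_inj => //; apply/seteqP.
by split; apply: (covered_by_open_nbhs_sub abcov).
Qed.

Lemma prime_filter_eq_open_nbhs (F : set (set X)) a b z : prime_filter F ->
  open a -> F b -> ~ F a -> b `\` a = [set z] -> F = open_nbhs z.
Proof.
move=> [[Fo [_ [Fup FI]]] [_ Fprime]] oa Fb nFa baz.
have bz : b z by have [] : (b `\` a) z by rewrite baz.
have outside_a w : b w -> ~ a w -> w = z.
  by move=> bw naw; have : (b `\` a) w by []; rewrite baz.
apply/seteqP; split=> V.
- move=> FV; split; first exact: Fo.
  apply: contrapT => nVz; apply: nFa; apply: (Fup (V `&` b)) => //; first exact: FI.
  by move=> w [Vw bw]; apply: contrapT => /(outside_a w bw) wz; rewrite wz in Vw.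
- move=> [oV Vz]; have obV : open (V `&` b) by apply: openI => //; exact: Fo.
  have : F (a `|` (V `&` b)).
    apply: (Fup b) => //; first exact: openU.
    move=> w bw; have [aw|naw] := pselect (a w); first by left.
    by right; rewrite (outside_a w bw naw).
  by case/Fprime=> // FVb; apply: (Fup (V `&` b)) => // w [].
Qed.

Lemma locally_closed_covered_by x U C : open U -> closed C ->
  U `&` C = [set x] -> covered_by (U `&` ~` C) U.
Proof.
move=> oU cC UCx; have [Ux Cx] : (U `&` C) x by rewrite UCx.
have in_UC_eq w : U w -> C w -> w = x.
  by move=> Uw Cw; have : (U `&` C) w by []; rewrite UCx.
split; first by apply: openI => //; exact: closed_openC.
split=> //; split.
  by apply/properP; split=> [w []|]; last by exists x => // -[].
move=> [c [_ [/properP [Dc [w cw nDw]] [cU ncU]]]].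
have Cw : C w by apply: contrapT => nCw; apply: nDw; split=> //; exact: cU.
have wx := in_UC_eq w (cU w cw) Cw; subst w.
apply: ncU => u Uu; have [Cu|nCu] := pselect (C u); first by rewrite (in_UC_eq u Uu Cu).
exact: Dc.
Qed.

Lemma slicing_filterP (F : set (set X)) : kolmogorov_space X ->
  slicing_filter F <-> exists2 z, locally_closed_point z & F = open_nbhs z.
Proof.
move=> hX; split.
- move=> [Fprime [a [b [Fb [nFa abcov]]]]].
  have [z baz] := covered_by_singleton hX abcov.
  have [oa [ob _]] := abcov.
  exists z; last exact: (prime_filter_eq_open_nbhs Fprime oa Fb nFa baz).
  exists b; split=> //; split; first by have [] : (b `\` a) z by rewrite baz.
  by exists (~` a); split; [exact: open_closedC|rewrite -setDE].
- move=> [x [U [oU [Ux [C [cC UCx]]]]] ->].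
  split; first exact: open_nbhs_prime_filter.
  exists (U `&` ~` C), U; split=> //; split; last exact: locally_closed_covered_by UCx.
  by move=> [_ []]; have [] : (U `&` C) x by rewrite UCx.
Qed.

End OpenNeighbourhoods.

Lemma Omega_preimage_open_nbhs (X Y : topologicalType) (f : X -> Y) x :
  continuous f -> Omega_preimage f (open_nbhs x) = open_nbhs (f x).
Proof.
move=> /continuousP fcont; apply/seteqP; split=> V /=; first by move=> [oV [_ Vfx]].
by move=> [oV Vfx]; split=> //; split=> //; exact: fcont.
Qed.

Theorem proposition5p10 (X Y : topologicalType) (f : X -> Y)
  (hX : kolmogorov_space X) (hY : kolmogorov_space Y)
  (hf : continuous f) :
  locally_closed_map f <-> D_morphism f.
Proof.
split=> [flc F /(slicing_filterP _ hX) [x xlc ->]|fD x xlc].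
  by rewrite Omega_preimage_open_nbhs //; apply/slicing_filterP => //; exists (f x) => //; exact: flc.
have /(slicing_filterP _ hY) [z zlc] : slicing_filter (Omega_preimage f (open_nbhs x)).
  by apply: fD; apply/slicing_filterP => //; exists x.
by rewrite Omega_preimage_open_nbhs // => /kolmogorov_open_nbhs_inj ->.
Qed.
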